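(* Let $G$ and $H$ be finite simple connected graphs, each of order at least $2$. If the Cartesian product $G \,\square\, H$ is well-dominated, then $\gamma(G \,\square\, H)=\gamma(G)\cdot n(H)=\gamma(H)\cdot n(G)$.
   Context: $n(X)$ is the order of $X$ and $\gamma(X)$ its domination number. A graph is well-dominated if every minimal (with respect to inclusion) dominating set is a minimum dominating set. The Cartesian product $G\,\square\, H$ has vertex set $V(G)\times V(H)$, with $(g_1,h_1)$ adjacent to $(g_2,h_2)$ iff either ($g_1=g_2$ and $h_1h_2\in E(H)$) or ($h_1=h_2$ and $g_1g_2\in E(G)$). *)

From mathcomp Require Import all_boot.
Set Implicit Arguments. Unset Strict Implicit. Unset Printing Implicit Defensive.

Definition simple_graph (T : finType) (e : rel T) : Prop :=
  symmetric e /\ irreflexive e.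

Definition connected_graph (T : finType) (e : rel T) : Prop :=
  forall x y : T, connect e x y.

Definition dominating (T : finType) (e : rel T) (D : {set T}) : bool :=
  [forall v, (v \in D) || [exists u in D, e u v]].

Definition minimal_dominating (T : finType) (e : rel T) (D : {set T}) : Prop :=
  dominating e D /\ forall D' : {set T}, D' \proper D -> ~~ dominating e D'.

(* domination number: minimum cardinality of a dominating set
   (the full vertex set always dominates) *)
Definition domination_number (T : finType) (e : rel T) : nat :=
  \big[minn/#|T|]_(D : {set T} | dominating e D) #|D|.

Definition minimum_dominating (T : finType) (e : rel T) (D : {set T}) : Prop :=
  dominating e D /\ #|D| = domination_number e.

Definition well_dominated (T : finType) (e : rel T) : Prop :=
  forall D : {set T}, minimal_dominating e D -> minimum_dominating e D.

Definition cart_prod (T1 T2 : finType) (e1 : rel T1) (e2 : rel T2)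
  : rel (T1 * T2)%type :=
  fun x y => ((x.1 == y.1) && e2 x.2 y.2) || ((x.2 == y.2) && e1 x.1 y.1).

From mathcomp Require Import all_boot.
From mathcomp Require Import zify.
Set Implicit Arguments.
Unset Strict Implicit.
Unset Printing Implicit Defensive.

(* If D is a dominating set of G in which every vertex d has an external
   private neighbour g, then D x V(H) is a minimal dominating set of G □ H:
   removing (d, h) leaves (g, h) undominated.  Such a D can be chosen of
   minimum size (Bollobás–Cockayne): among minimum dominating sets take one
   with the most vertices having a neighbour inside the set; a vertex d
   without external private neighbour must then be isolated in D, and
   exchanging d for any neighbour of d gives a minimum dominating set with
   more such vertices.  Well-domination then forces
   γ(G □ H) = |D x V(H)| = γ(G) n(H), and symmetrically
   γ(G □ H) = γ(H) n(G). *)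

Section Domination.
Variables (T : finType) (e : rel T).
Implicit Types D : {set T}.

Lemma domination_number_le D : dominating e D -> domination_number e <= #|D|.
Proof.
move=> domD; rewrite /domination_number.
elim: (index_enum _) (mem_index_enum D) => [//| D' s IHs].
rewrite in_cons big_cons => /orP [/eqP <- | Ds]; first by rewrite domD geq_minl.
by case: ifP => _; [apply: leq_trans (geq_minr _ _) (IHs Ds) | apply: IHs].
Qed.

Lemma domination_number_attained :
  exists2 D, dominating e D & #|D| = domination_number e.
Proof.
apply: (big_ind (fun n => exists2 D, dominating e D & #|D| = n)).
- by exists setT; [apply/forallP => v; rewrite in_setT | rewrite cardsT].
- move=> m n [Dm domDm <-] [Dn domDn <-].
  by rewrite /minn; case: ltnP => _; [exists Dm | exists Dn].
- by move=> D domD; exists D.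
Qed.

Lemma dominatingS D D' : D \subset D' -> dominating e D -> dominating e D'.
Proof.
move=> sDD' /forallP domD; apply/forallP => v.
case/orP: (domD v) => [vD | /existsP [u /andP [uD euv]]].
  by rewrite (subsetP sDD').
by apply/orP; right; apply/existsP; exists u; rewrite (subsetP sDD').
Qed.

Definition ext_private_nbr D d g :=
  [&& g \notin D, e d g & [forall u in D, e u g ==> (u == d)]].

Lemma ext_private_nbr_setD1 D d g :
  ext_private_nbr D d g -> ~~ dominating e (D :\ d).
Proof.
case/and3P => gD _ /forall_inP privg; apply/negP => /forallP /(_ g).
rewrite in_setD1 (negbTE gD) andbF /= => /exists_inP [u].
rewrite in_setD1 => /andP [ud uD] eug.
by move: (implyP (privg u uD) eug); rewrite (negbTE ud).
Qed.

Lemma minimal_dominating_ext_private D :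
  dominating e D -> (forall d, d \in D -> exists g, ext_private_nbr D d g) ->
  minimal_dominating e D.
Proof.
move=> domD privD; split=> // D' /properP [sD'D [d dD dD']].
have [g /ext_private_nbr_setD1] := privD d dD.
by apply: contra; apply: dominatingS; apply/subsetD1P.
Qed.

Definition non_isolated D := [set x in D | [exists y in D, e x y]].

Hypotheses (e_sym : symmetric e) (e_irr : irreflexive e).

Lemma other_dominator D d v :
  ~~ ext_private_nbr D d v -> v \notin D -> e d v ->
  exists2 u, u \in D :\ d & e u v.
Proof.
move=> + vD edv; rewrite /ext_private_nbr vD edv /= negb_forall_in.
case/exists_inP => u uD; rewrite negb_imply => /andP [euv ud].
by exists u; rewrite // in_setD1 ud.
Qed.

Section NoExtPrivateNbr.
Variables (D : {set T}) (d : T).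
Hypotheses (domD : dominating e D) (noprv : forall g, ~~ ext_private_nbr D d g).

Lemma isolated_no_ext_private_nbr :
  ~~ dominating e (D :\ d) -> ~~ [exists u in D :\ d, e u d].
Proof.
case/forallPn => v; rewrite negb_or => /andP [vD' undomv].
have [vd | vd] := eqVneq v d; first by rewrite vd in undomv.
have vD : v \notin D by rewrite in_setD1 vd in vD'.
case/orP: (forallP domD v) => [/(negP vD) // | /exists_inP [u uD euv]].
case: (eqVneq u d) => [ud | ud].
  have edv : e d v by rewrite -ud.
  have [u' u'D eu'v] := other_dominator (noprv v) vD edv.
  by case/negP: undomv; apply/exists_inP; exists u'.
by case/negP: undomv; apply/exists_inP; exists u; rewrite // in_setD1 ud.
Qed.

Lemma dominating_exchange g : e d g -> dominating e (g |: (D :\ d)).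
Proof.
move=> edg; apply/forallP => v; rewrite in_setU1.
have [-> | vd] := eqVneq v d.
  by apply/orP; right; apply/exists_inP; exists g; rewrite ?setU11 // e_sym.
have [vD | vD] := boolP (v \in D); first by rewrite in_setD1 vd vD orbT.
apply/orP; right.
have [u uD euv] : exists2 u, u \in D :\ d & e u v.
  case/orP: (forallP domD v) => [/(negP vD) // | /exists_inP [u uD euv]].
  case: (eqVneq u d) => [ud | ud]; last by exists u; rewrite // in_setD1 ud.
  by apply: other_dominator (noprv v) vD _; rewrite -ud.
by apply/exists_inP; exists u; rewrite // in_setU1 uD orbT.
Qed.

End NoExtPrivateNbr.

Lemma non_isolated_exchange D d g u :
  ~~ [exists y in D :\ d, e y d] -> g \notin D -> u \in D :\ d -> e u g ->
  #|non_isolated D| < #|non_isolated (g |: (D :\ d))|.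
Proof.
move=> isod gD uD eug; apply: proper_card; apply/properP; split.
  apply/subsetP => x; rewrite !inE => /andP [xD /exists_inP [y yD exy]].
  have yd : y != d.
    apply: contraNneq isod => yd; apply/exists_inP; exists x; last first.
      by rewrite -yd.
    rewrite in_setD1 xD andbT.
    by apply: contraTneq exy => ->; rewrite yd e_irr.
  have xd : x != d.
    apply: contraNneq isod => xd; apply/exists_inP; exists y.
      by rewrite in_setD1 yd.
    by rewrite e_sym -xd.
  rewrite xd xD orbT /=; apply/exists_inP; exists y => //.
  by rewrite !inE yd yD orbT.
exists g; last by rewrite inE (negbTE gD).
rewrite !inE eqxx /=; apply/exists_inP; exists u; last by rewrite e_sym.
by rewrite in_setU1 uD orbT.
Qed.

Lemma minimum_dominating_ext_private :
  (forall x, exists y, e x y) ->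
  exists D, [/\ dominating e D, #|D| = domination_number e &
    forall d, d \in D -> exists g, ext_private_nbr D d g].
Proof.
move=> nbr; have [D0 domD0 cardD0] := domination_number_attained.
pose P D := dominating e D && (#|D| == domination_number e).
have PD0 : P D0 by rewrite /P domD0 cardD0 eqxx.
case: (arg_maxnP (fun D => #|non_isolated D|) PD0).
move=> D /andP [domD /eqP cardD] Dmax.
exists D; split=> // d dD.
have [/existsP // | /existsPn noprv] := boolP [exists g, ext_private_nbr D d g].
have undomD' : ~~ dominating e (D :\ d).
  apply/negP => /domination_number_le; rewrite -cardD (cardsD1 d D) dD; lia.
have isod := isolated_no_ext_private_nbr domD noprv undomD'.
have [g edg] := nbr d.
have gD : g \notin D.
  apply: contraNN isod => gD; apply/exists_inP; exists g; last by rewrite e_sym.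
  by rewrite in_setD1 gD andbT; apply: contraTneq edg => ->; rewrite e_irr.
have [u uD eug] := other_dominator (noprv g) gD edg.
have cardD' : #|g |: (D :\ d)| = domination_number e.
  by rewrite cardsU1 in_setD1 (negbTE gD) andbF -cardD (cardsD1 d D) dD.
have PD' : P (g |: (D :\ d)).
  by rewrite /P dominating_exchange // cardD' eqxx.
have := non_isolated_exchange isod gD uD eug.
by rewrite ltnNge (Dmax _ PD' : _ <= _).
Qed.

End Domination.

Lemma neighbor_of_connected (T : finType) (e : rel T) :
  connected_graph e -> 2 <= #|T| -> forall x, exists y, e x y.
Proof.
move=> conn cardT x.
have [y] : exists y, y \in [set~ x].
  by apply/set0Pn; rewrite -card_gt0 cardsC1; lia.
rewrite !inE => yx.
case/connectP: (conn x y) => [[|z p]] /=.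
  by move=> _ yE; rewrite yE eqxx in yx.
by case/andP => exz _ _; exists z.
Qed.

Section CartesianProduct.
Variables (T1 T2 : finType) (e1 : rel T1) (e2 : rel T2).
Local Notation e := (cart_prod e1 e2).

Lemma dominating_cart_prodl (D : {set T1}) :
  dominating e1 D -> dominating e (setX D [set: T2]).
Proof.
move=> /forallP domD; apply/forallP => -[g h].
rewrite in_setX in_setT andbT /=.
case/orP: (domD g) => [-> // | /exists_inP [u uD eug]].
apply/orP; right; apply/exists_inP; exists (u, h).
  by rewrite in_setX uD in_setT.
by rewrite /cart_prod /= eqxx eug orbT.
Qed.

Lemma dominating_cart_prodr (D : {set T2}) :
  dominating e2 D -> dominating e (setX [set: T1] D).
Proof.
move=> /forallP domD; apply/forallP => -[g h]; rewrite in_setX in_setT /=.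
case/orP: (domD h) => [-> // | /exists_inP [u uD ehu]].
apply/orP; right; apply/exists_inP; exists (g, u).
  by rewrite in_setX uD in_setT.
by rewrite /cart_prod /= eqxx ehu.
Qed.

Lemma ext_private_nbr_cart_prodl (D : {set T1}) d g h :
  ext_private_nbr e1 D d g ->
  ext_private_nbr e (setX D [set: T2]) (d, h) (g, h).
Proof.
case/and3P => gD edg /forall_inP privg.
rewrite /ext_private_nbr in_setX (negbTE gD) /cart_prod /= eqxx edg orbT /=.
apply/forall_inP => -[u k]; rewrite in_setX in_setT andbT /= => uD.
apply/implyP; case/orP => [/andP [/eqP ug _] | /andP [/eqP -> eug]].
  by rewrite -ug uD in gD.
by rewrite xpair_eqE eqxx andbT (implyP (privg u uD) eug).
Qed.

Lemma ext_private_nbr_cart_prodr (D : {set T2}) d g h :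
  ext_private_nbr e2 D d g ->
  ext_private_nbr e (setX [set: T1] D) (h, d) (h, g).
Proof.
case/and3P => gD edg /forall_inP privg.
rewrite /ext_private_nbr in_setX (negbTE gD) andbF /cart_prod /= eqxx edg /=.
apply/forall_inP => -[k u]; rewrite in_setX in_setT /= => uD.
apply/implyP; case/orP => [/andP [/eqP -> eug] | /andP [/eqP ug _]]; last first.
  by rewrite -ug uD in gD.
by rewrite xpair_eqE eqxx (implyP (privg u uD) eug).
Qed.

Lemma minimal_dominating_cart_prodl (D : {set T1}) :
  dominating e1 D ->
  (forall d, d \in D -> exists g, ext_private_nbr e1 D d g) ->
  minimal_dominating e (setX D [set: T2]).
Proof.
move=> domD privD; apply: minimal_dominating_ext_private.
  exact: dominating_cart_prodl.
move=> [d h]; rewrite in_setX /= => /andP [dD _].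
have [g privg] := privD d dD.
by exists (g, h); apply: ext_private_nbr_cart_prodl.
Qed.

Lemma minimal_dominating_cart_prodr (D : {set T2}) :
  dominating e2 D ->
  (forall d, d \in D -> exists g, ext_private_nbr e2 D d g) ->
  minimal_dominating e (setX [set: T1] D).
Proof.
move=> domD privD; apply: minimal_dominating_ext_private.
  exact: dominating_cart_prodr.
move=> [h d]; rewrite in_setX /= => /andP [_ dD].
have [g privg] := privD d dD.
by exists (h, g); apply: ext_private_nbr_cart_prodr.
Qed.

End CartesianProduct.

Theorem proposition16 (T1 T2 : finType) (e1 : rel T1) (e2 : rel T2) :
  simple_graph e1 -> simple_graph e2 ->
  connected_graph e1 -> connected_graph e2 ->
  2 <= #|T1| -> 2 <= #|T2| ->
  well_dominated (cart_prod e1 e2) ->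
  domination_number (cart_prod e1 e2) = domination_number e1 * #|T2| /\
  domination_number e1 * #|T2| = domination_number e2 * #|T1|.
Proof.
move=> [sym1 irr1] [sym2 irr2] conn1 conn2 card1 card2 wd.
have [D1 [domD1 cardD1 privD1]] :=
  minimum_dominating_ext_private sym1 irr1 (neighbor_of_connected conn1 card1).
have [D2 [domD2 cardD2 privD2]] :=
  minimum_dominating_ext_private sym2 irr2 (neighbor_of_connected conn2 card2).
have [_ gamma1] := wd _ (minimal_dominating_cart_prodl e2 domD1 privD1).
have [_ gamma2] := wd _ (minimal_dominating_cart_prodr e1 domD2 privD2).
rewrite cardsX cardsT cardD1 in gamma1.
rewrite cardsX cardsT cardD2 mulnC in gamma2.
by rewrite -gamma1 gamma2.
Qed.
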